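(* Let $c,\rho\in(0,1)$ with $c+\rho>1$. Suppose the conditional gradient algorithm chooses $\theta_k\in[0,1]$ with $\rho\hat\theta_k\le\theta_k\le\hat\theta_k$, where \[ \hat\theta_k=\max\{\theta\in[0,1]:(1-\theta)\mathrm{gap}(x_k,g_k)+\mathcal D(x_k,s_k,\theta)\le(1-c\theta)\mathrm{gap}(x_k,g_k)\}. \] Suppose $q>1$, $r\in[0,1]$ are such that $(\mathcal D,\mathrm{gap})$ satisfies the $(q,r)$-growth property with some finite $M>0$. Then for $k=0,1,\dots$ \[ \mathrm{gap}_{k+1}\le\mathrm{gap}_k\Big(1-(c+\rho-1)\min\Big\{1,\Big(\tfrac{q(1-c)}{M}\mathrm{gap}_k^{1-r}\Big)^{\frac1{q-1}}\Big\}\Big). \] If $r=1$ then $\mathrm{gap}_k\le\mathrm{gap}_0\big(1-(c+\rho-1)\min\{1,(q(1-c)/M)^{1/(q-1)}\}\big)^k$. If $r\in[0,1)$ then $\mathrm{gap}_k\le\mathrm{gap}_0(1-(c+\rho-1))^k$ for $k=0,\dots,k_0$, where $k_0$ is the smallest $k$ with $\mathrm{gap}_k^{1-r}\le\frac{M}{q(1-c)}$, and for $k\ge k_0$ \[ \mathrm{gap}_k\le\Big(\mathrm{gap}_{k_0}^{\frac{r-1}{q-1}}+\frac{(1-r)(c+\rho-1)}{q-1}\Big(\frac{q(1-c)}{M}\Big)^{\frac1{q-1}}(k-k_0)\Big)^{\frac{q-1}{r-1}}. \]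
   Context: Let $f,\Psi:\mathbb{R}^n\to\mathbb{R}\cup\{\infty\}$ be closed proper convex functions such that (A1) $f$ is differentiable on $\mathrm{dom}(\Psi)$, and (A2) for every $x\in\mathrm{dom}(f)$ the set $\arg\min_s\{\langle\nabla f(x),s\rangle+\Psi(s)\}$ is nonempty. $f^*,\Psi^*$ denote convex conjugates; $\arg\min_y\{\langle g,y\rangle+\Psi(y)\}=\partial\Psi^*(-g)$. $D_f(y,x)=f(y)-f(x)-\langle\nabla f(x),y-x\rangle$. Duality gap: $\mathrm{gap}(x,u)=f(x)+\Psi(x)+f^*(u)+\Psi^*(-u)$ for $x\in\mathrm{dom}(\Psi)$, $u\in\mathrm{dom}(f^* )$. For $x,s\in\mathrm{dom}(\Psi)$, $\theta\in[0,1]$: $\mathcal{D}(x,s,\theta)=D_f(x+\theta(s-x),x)+\Psi(x+\theta(s-x))-(1-\theta)\Psi(x)-\theta\Psi(s)$. Conditional gradient algorithm: given $x_0\in\mathrm{dom}(\Psi)$, for $k=0,1,2,\dots$ let $g_k=\nabla f(x_k)$, pick $s_k\in\arg\min_y\{\langle g_k,y\rangle+\Psi(y)\}$ and $\theta_k\in[0,1]$, and set $x_{k+1}=(1-\theta_k)x_k+\theta_k s_k$. The best duality gaps are $\mathrm{gap}_k=\min_{i=0,\dots,k}\mathrm{gap}(x_k,g_i)$. $(q,r)$-growth property ($q>1$, $r\in[0,1]$): there is a finite $M>0$ such that for all $x\in\mathrm{dom}(\Psi)$, $g=\nabla f(x)$ and $s\in\partial\Psi^*(-g)$, $\mathcal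 D(x,s,\theta)\le \frac{M\theta^q}{q}\mathrm{gap}(x,g)^r$ for all $\theta\in[0,1]$. *)

From HB Require Import structures.
From mathcomp Require Import all_boot all_order all_algebra.
From mathcomp Require Import all_classical all_reals all_analysis.
Set Implicit Arguments. Unset Strict Implicit. Unset Printing Implicit Defensive.
Import Order.TTheory GRing.Theory Num.Theory.
Local Open Scope classical_set_scope.
Local Open Scope ring_scope.

Section Defs.
Variables (R : realType) (n : nat).
Notation vec := 'rV[R]_n.

Definition dot (u v : vec) : R := \sum_(i < n) u 0 i * v 0 i.
Definition enorm (h : vec) : R := Num.sqrt (dot h h).

Definition dom (h : vec -> \bar R) : set vec := [set x | (h x < +oo)%E].

Definition proper_fun (h : vec -> \bar R) : Prop :=
  (forall x, h x != -oo%E) /\ (exists x, (h x < +oo)%E).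

(* convex (extended-valued, with 0 * (+oo) = 0) *)
Definition convex_fun (h : vec -> \bar R) : Prop :=
  forall (x y : vec) (t : R), 0 <= t <= 1 ->
    (h ((1 - t) *: x + t *: y : vec)%R <= (1 - t)%:E * h x + t%:E * h y)%E.

(* closed = lower semicontinuous *)
Definition closed_fun (h : vec -> \bar R) : Prop :=
  forall x (a : R), (a%:E < h x)%E ->
    exists2 d : R, 0 < d & forall y, enorm (y - x) < d -> (a%:E < h y)%E.

Definition closed_proper_convex (h : vec -> \bar R) : Prop :=
  [/\ closed_fun h, proper_fun h & convex_fun h].

Definition conjugate (h : vec -> \bar R) (u : vec) : \bar R :=
  ereal_sup [set ((dot u x)%:E - h x)%E | x in [set: vec]].

Definition is_gradient (h : vec -> \bar R) (x g : vec) : Prop :=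
  h x \is a fin_num /\
  forall e : R, 0 < e -> exists2 d : R, 0 < d & forall y, enorm (y - x) < d ->
     h y \is a fin_num /\
     `| fine (h y) - fine (h x) - dot g (y - x) | <= e * enorm (y - x).

Definition argmin_lin (Psi : vec -> \bar R) (g : vec) : set vec :=
  [set s | forall y, ((dot g s)%:E + Psi s <= (dot g y)%:E + Psi y)%E].

Definition subdiff (h : vec -> \bar R) (u : vec) : set vec :=
  [set s | h u \is a fin_num /\
           forall v, (h u + (dot s (v - u))%:E <= h v)%E].

(* Bregman distance D_f(y,x) (used for x, y in dom Psi, where f is finite) *)
Definition bregman (f : vec -> \bar R) (gradf : vec -> vec) (y x : vec) : R :=
  fine (f y) - fine (f x) - dot (gradf x) (y - x).

(* D(x,s,theta), for x, s in dom Psi (all terms are then finite) *)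
Definition Dcal (f Psi : vec -> \bar R) (gradf : vec -> vec)
    (x s : vec) (th : R) : R :=
  let z := x + th *: (s - x) in
  bregman f gradf z x + fine (Psi z) - (1 - th) * fine (Psi x) - th * fine (Psi s).

Definition gap (f Psi : vec -> \bar R) (x u : vec) : \bar R :=
  (f x + Psi x + conjugate f u + conjugate Psi (- u))%E.

Definition growth_prop (f Psi : vec -> \bar R) (gradf : vec -> vec)
    (q r M : R) : Prop :=
  forall x, dom Psi x -> forall s, subdiff (conjugate Psi) (- gradf x) s ->
  forall th : R, 0 <= th <= 1 ->
    Dcal f Psi gradf x s th <=
      M * (th `^ q) / q * (fine (gap f Psi x (gradf x)) `^ r).

Definition is_max_of (S : set R) (t : R) : Prop :=
  S t /\ forall u, S u -> u <= t.

(* the best duality gap  gap_k = min_{i=0..k} gap(x_k, g_i) *)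
Definition best_gap (f Psi : vec -> \bar R) (gradf : vec -> vec)
    (x : nat -> vec) (k : nat) : \bar R :=
  \big[mine/+oo%E]_(i < k.+1) gap f Psi (x k) (gradf (x i)).

End Defs.

From HB Require Import structures.
From mathcomp Require Import all_boot all_order all_algebra.
From mathcomp Require Import all_classical all_reals all_analysis.
From mathcomp Require Import ring lra.
Set Implicit Arguments. Unset Strict Implicit. Unset Printing Implicit Defensive.
Import Order.TTheory GRing.Theory Num.Theory.
Local Open Scope classical_set_scope.
Local Open Scope ring_scope.

(* Along a step x' = x + th (s - x) the objective f + Psi changes by
   - th gap(x, grad f x) + D(x, s, th), and every duality gap gap(x_k, g_i) changes by
   the same amount, so the best gap satisfies gap_(k+1) <= gap_k - c theta_k gap(x_k, g_k).
   Since D(x, s, t th) <= t D(x, s, th), the admissible step sizes form the interval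
   [0, thetahat_k]; the (q,r)-growth bound shows that
   mu_k = min {1, (q (1 - c) / M gap^(1-r))^(1/(q-1))} is admissible, so
   theta_k >= rho mu_k and gap_(k+1) <= gap_k (1 - (c + rho - 1) mu_k).  The rates come from
   this scalar recursion: it is geometric while mu_k = 1, and once mu_k < 1 Bernoulli's
   inequality makes gap_k^((r-1)/(q-1)) grow at least linearly. *)

Section InnerProduct.
Variables (R : realType) (n : nat).
Implicit Types u v w : 'rV[R]_n.

Lemma dotC u v : dot u v = dot v u.
Proof. by apply: eq_bigr => i _; rewrite mulrC. Qed.

Lemma dotDr u v w : dot u (v + w) = dot u v + dot u w.
Proof. by rewrite /dot -big_split; apply: eq_bigr => i _; rewrite !mxE mulrDr. Qed.

Lemma dotZr u v (a : R) : dot u (a *: v) = a * dot u v.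
Proof. by rewrite /dot mulr_sumr; apply: eq_bigr => i _; rewrite !mxE mulrCA. Qed.

Lemma dotNr u v : dot u (- v) = - dot u v.
Proof. by rewrite -scaleN1r dotZr mulN1r. Qed.

Lemma dotBr u v w : dot u (v - w) = dot u v - dot u w.
Proof. by rewrite dotDr dotNr. Qed.

Lemma dotNl u v : dot (- u) v = - dot u v.
Proof. by rewrite dotC dotNr dotC. Qed.

Lemma enormZ u (a : R) : 0 <= a -> enorm (a *: u) = a * enorm u.
Proof.
move=> a0; rewrite /enorm dotZr dotC dotZr mulrA -expr2 sqrtrM ?sqr_ge0 //.
by rewrite sqrtr_sqr ger0_norm.
Qed.

Lemma segmentE u v (t : R) : u + t *: (v - u) = (1 - t) *: u + t *: v.
Proof. by apply/matrixP => i j; rewrite !mxE; ring. Qed.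

Lemma segmentB u v (t : R) : ((1 - t) *: u + t *: v) - u = t *: (v - u).
Proof. by rewrite -segmentE addrAC subrr add0r. Qed.

Lemma segmentM u v (t th : R) :
  (1 - t * th) *: u + (t * th) *: v = (1 - t) *: u + t *: ((1 - th) *: u + th *: v).
Proof. by apply/matrixP => i j; rewrite !mxE; ring. Qed.

End InnerProduct.

Section Domain.
Variables (R : realType) (n : nat) (h : 'rV[R]_n -> \bar R).
Hypothesis hp : proper_fun h.

Lemma dom_fin_num z : dom h z -> h z \is a fin_num.
Proof. by rewrite /dom /= fin_numE hp.1 => /lt_eqF ->. Qed.

Lemma dom_segment u v th : convex_fun h -> 0 <= th <= 1 -> dom h u -> dom h v ->
  dom h ((1 - th) *: u + th *: v).
Proof.
move=> cvx th01 hu hv; apply: le_lt_trans (cvx u v th th01) _.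
by rewrite -(fineK (dom_fin_num hu)) -(fineK (dom_fin_num hv)) -!EFinM -EFinD ltry.
Qed.

End Domain.

Section ConvexFunctions.
Variables (R : realType) (n : nat).
Local Notation vec := 'rV[R]_n.
Implicit Types (h : vec -> \bar R) (u x y : vec).

Lemma convex_gradient_le h x g : convex_fun h -> proper_fun h ->
  is_gradient h x g -> forall y, (h x + (dot g (y - x))%:E <= h y)%E.
Proof.
move=> cvx [hNy _] [hx grad] y.
case Ehy: (h y) => [b| |]; [|by rewrite leey|by move: (hNy y); rewrite Ehy].
rewrite -(fineK hx) -EFinD lee_fin.
set a := fine (h x); set D := dot g (y - x); set N := enorm (y - x).
have N0 : 0 <= N by exact: sqrtr_ge0.
rewrite leNgt; apply/negP => hlt.
(* on z = x + t (y - x), differentiability gives h z >= a + t D - e t N and convexity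
   gives h z <= a + t (b - a); as e N < a + D - b this fails for small t > 0 *)
set eps := a + D - b.
have eps0 : 0 < eps by rewrite /eps; lra.
set e := eps / (2 * (N + 1)).
have e0 : 0 < e by rewrite /e divr_gt0 //; lra.
have eN : e * (2 * (N + 1)) = eps by rewrite /e divfK // mulf_neq0 // gt_eqF //; lra.
have [d d0 near_x] := grad e e0.
set t := Num.min 1 (d / (N + 1)).
have t0 : 0 < t by rewrite lt_min ltr01 divr_gt0 //; lra.
have t1 : t <= 1 by rewrite ge_min lexx.
have tN : t * N < d.
  have : t <= d / (N + 1) by rewrite ge_min lexx orbT.
  by rewrite ler_pdivlMr; [nra | lra].
set z := (1 - t) *: x + t *: y.
have zx : enorm (z - x) = t * N by rewrite segmentB enormZ // ltW.
have [hz] := near_x z (ltac:(by rewrite zx)).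
rewrite segmentB dotZr enormZ ?(ltW t0) // -/D -/N ler_norml => /andP[lower _].
have := cvx x y t; rewrite t1 (ltW t0) => /(_ isT).
rewrite -(fineK hz) -/z -(fineK hx) Ehy -!EFinM -EFinD lee_fin => upper.
have : t * eps <= t * (e * N).
  by move: lower upper; rewrite /eps -/a => *; nra.
rewrite ler_pM2l // => epsN.
by clear -epsN eN e0 N0; nra.
Qed.

Lemma conjugate_ge h u y : ((dot u y)%:E - h y <= conjugate h u)%E.
Proof. by apply: ereal_sup_ubound; exists y. Qed.

Lemma conjugate_gradientE h x g : convex_fun h -> proper_fun h ->
  is_gradient h x g -> conjugate h g = (dot g x - fine (h x))%:E.
Proof.
move=> cvx hp hg; have hx := hg.1.
apply/eqP; rewrite eq_le; apply/andP; split; last first.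
  by rewrite EFinB fineK //; exact: conjugate_ge.
apply: ge_ereal_sup => _ [y _ <-].
have := convex_gradient_le cvx hp hg y.
rewrite -(fineK hx); case Ehy: (h y) => [b| |].
- by rewrite -EFinD -EFinB !lee_fin dotBr; lra.
- by rewrite addeNy leNye.
- by move: (hp.1 y); rewrite Ehy.
Qed.

Lemma argmin_lin_dom h g s : proper_fun h -> argmin_lin h g s -> dom h s.
Proof.
move=> hp; case: (hp) => hNy [y hy] /(_ y); rewrite /dom /=.
case Ehs: (h s) => [b| |] hmin; first exact: ltry.
- by move: hmin; rewrite addey // -(fineK (dom_fin_num hp hy)) -EFinD leNgt ltry.
- by move: (hNy s); rewrite Ehs.
Qed.

Lemma conjugate_argminE h g s : proper_fun h -> argmin_lin h g s ->
  conjugate h (- g) = (- dot g s - fine (h s))%:E.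
Proof.
move=> hp hs; have hsf := dom_fin_num hp (argmin_lin_dom hp hs).
apply/eqP; rewrite eq_le; apply/andP; split; last first.
  by rewrite EFinB fineK // -dotNl; exact: conjugate_ge.
apply: ge_ereal_sup => _ [y _ <-].
have := hs y; rewrite -(fineK hsf); case Ehy: (h y) => [b| |].
- by rewrite -EFinB -!EFinD !lee_fin dotNl; lra.
- by rewrite addeNy leNye.
- by move: (hp.1 y); rewrite Ehy.
Qed.

Lemma argmin_lin_subdiff h g s : proper_fun h -> argmin_lin h g s ->
  subdiff (conjugate h) (- g) s.
Proof.
move=> hp hs; rewrite /subdiff (conjugate_argminE hp hs); split=> // v.
apply: le_trans (conjugate_ge h v s).
rewrite -(fineK (dom_fin_num hp (argmin_lin_dom hp hs))) -EFinD -EFinB lee_fin opprK dotDr (dotC s v) (dotC s).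
lra.
Qed.

End ConvexFunctions.

Lemma powRVK (R : realType) (x p : R) : 0 <= x -> p != 0 -> (x `^ p^-1) `^ p = x.
Proof. by move=> x0 p0; rewrite -powRrM mulVf // powRr1. Qed.

Lemma ler_powRN (R : realType) (x y t : R) : 0 < x -> x <= y -> 0 < t ->
  y `^ (- t) <= x `^ (- t).
Proof.
move=> x0 xy t0; have y0 := lt_le_trans x0 xy.
rewrite !powRN lef_pV2 ?posrE ?powR_gt0 //.
by apply: ge0_ler_powR; rewrite ?nnegrE ?(ltW t0) ?(ltW x0) ?(ltW y0).
Qed.

Lemma bernoulli_powRN (R : realType) (t al : R) : 0 <= t < 1 -> 0 < al ->
  1 + al * t <= (1 - t) `^ (- al).
Proof.
move=> /andP[t0 t1] al0; have t1' : 0 < 1 - t by lra.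
rewrite /powR gt_eqF //; apply: le_trans (expR_ge1Dx _) _.
have : ln (1 - t) <= - t by have := expR_ge1Dx (ln (1 - t)); rewrite lnK ?posrE //; lra.
by rewrite ler_expR; nra.
Qed.

(* [fine] makes these real-valued; they are only used on dom Psi, where f and Psi are finite *)
Definition objective (R : realType) n (f Psi : 'rV[R]_n -> \bar R) z :=
  fine (f z) + fine (Psi z).

Definition fw_gap (R : realType) n (Psi : 'rV[R]_n -> \bar R) (g y s : 'rV[R]_n) :=
  fine (Psi y) + dot g (y - s) - fine (Psi s).

Definition decrease_set (R : realType) n (f Psi : 'rV[R]_n -> \bar R)
    (gradf : 'rV[R]_n -> 'rV[R]_n) (c : R) (y s : 'rV[R]_n) : set R :=
  [set th : R | 0 <= th <= 1 /\
     ((1 - th)%:E * gap f Psi y (gradf y) + (Dcal f Psi gradf y s th)%:E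
        <= (1 - c * th)%:E * gap f Psi y (gradf y))%E].

Section LinearizationStep.
Variables (R : realType) (n : nat) (f Psi : 'rV[R]_n -> \bar R)
  (gradf : 'rV[R]_n -> 'rV[R]_n) (y s : 'rV[R]_n).
Hypotheses (hf : closed_proper_convex f) (hPsi : closed_proper_convex Psi)
  (hgrad : forall z, dom Psi z -> is_gradient f z (gradf z))
  (hy : dom Psi y) (hs : argmin_lin Psi (gradf y) s).

Local Notation F := (objective f Psi).
Local Notation a := (fw_gap Psi (gradf y) y s).
Local Notation D := (Dcal f Psi gradf y s).

Let pPsi : proper_fun Psi. Proof. by case: hPsi. Qed.
Let sdom : dom Psi s. Proof. exact: argmin_lin_dom hs. Qed.
Let Psi_fin z : dom Psi z -> Psi z = (fine (Psi z))%:E.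
Proof. by move=> /(dom_fin_num pPsi) /fineK. Qed.
Let f_fin z : dom Psi z -> f z = (fine (f z))%:E.
Proof. by move=> /hgrad [/fineK]. Qed.
Let zdom th : 0 <= th <= 1 -> dom Psi ((1 - th) *: y + th *: s).
Proof. by move=> th01; case: hPsi => _ _ cvx; exact: dom_segment. Qed.

Lemma gap_gradientE z : dom Psi z -> gap f Psi z (gradf y) = (F z - F y + a)%:E.
Proof.
move=> hz; case: hf => _ pf cf.
rewrite /gap (conjugate_gradientE cf pf (hgrad hy)) (conjugate_argminE pPsi hs).
by rewrite (f_fin hz) (Psi_fin hz) -!EFinD /objective /fw_gap dotBr; congr EFin; ring.
Qed.

Lemma gap_gradient_ge0 z : dom Psi z -> 0 <= F z - F y + a.
Proof.
move=> hz; case: hf => _ pf cf.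
have := convex_gradient_le cf pf (hgrad hy) z; have := hs z.
rewrite (f_fin hz) (Psi_fin hz) (f_fin hy) (Psi_fin sdom) -!EFinD !lee_fin.
by rewrite /objective /fw_gap !dotBr; lra.
Qed.

Lemma objective_segment th : F ((1 - th) *: y + th *: s) = F y - th * a + D th.
Proof.
rewrite /Dcal /bregman segmentE segmentB dotZr /objective /fw_gap !dotBr; ring.
Qed.

Lemma objective_convex u v t : 0 <= t <= 1 -> dom Psi u -> dom Psi v ->
  F ((1 - t) *: u + t *: v) <= (1 - t) * F u + t * F v.
Proof.
move=> t01 hu hv; case: hf => _ _ cf; case: hPsi => _ _ cPsi.
have hw : dom Psi ((1 - t) *: u + t *: v) by exact: dom_segment.
have := cf u v t t01; have := cPsi u v t t01.
rewrite (f_fin hu) (Psi_fin hu) (f_fin hv) (Psi_fin hv) (f_fin hw) (Psi_fin hw).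
by rewrite -!EFinM -!EFinD !lee_fin /objective; lra.
Qed.

Lemma Dcal_scale t th : 0 <= t <= 1 -> 0 <= th <= 1 -> D (t * th) <= t * D th.
Proof.
move=> t01 th01.
have := objective_convex t01 hy (zdom th01); rewrite -segmentM !objective_segment.
by move=> *; lra.
Qed.

Variables (c q r M : R).
Local Notation S := (decrease_set f Psi gradf c y s).

Lemma decrease_setE th : S th <-> 0 <= th <= 1 /\ D th <= (1 - c) * th * a.
Proof.
rewrite /decrease_set /= (gap_gradientE hy) subrr add0r -!EFinM -EFinD lee_fin.
by split=> -[th01 h]; split=> //; lra.
Qed.

Lemma decrease_set_le th' th : S th' -> 0 <= th <= th' -> S th.
Proof.
rewrite !decrease_setE => -[th'01 hth'] /andP[th0 thth'].
have [t t01 ->] : exists2 t, 0 <= t <= 1 & th = t * th'.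
  have [th'0|th'0] := eqVneq th' 0.
    exists 0; first by rewrite lexx ler01.
    by apply/eqP; rewrite mul0r eq_le th0 -th'0 thth'.
  exists (th / th'); last by rewrite divfK.
  have th'p : 0 < th' by rewrite lt_def th'0 (le_trans th0 thth').
  by rewrite divr_ge0 ?ler_pdivrMr ?mul1r ?(ltW th'p).
split; first by case/andP: t01 => *; case/andP: th'01 => *; apply/andP; split; nra.
apply: le_trans (Dcal_scale t01 th'01) _.
have -> : (1 - c) * (t * th') * a = t * ((1 - c) * th' * a) by ring.
by apply: ler_wpM2l hth'; case/andP: t01.
Qed.

Lemma decrease_set_growth : c < 1 -> 1 < q -> 0 < M -> growth_prop f Psi gradf q r M ->
  0 < a -> S (Num.min 1 ((q * (1 - c) / M * a `^ (1 - r)) `^ (q - 1)^-1)).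
Proof.
move=> c1 q1 M0 hgr a0.
set A := q * (1 - c) / M; set B := (A * a `^ (1 - r)) `^ (q - 1)^-1; set m := Num.min 1 B.
have q0 : 0 < q by exact: lt_trans ltr01 q1.
have A0 : 0 <= A by rewrite /A divr_ge0 ?mulr_ge0 //; lra.
have m0 : 0 <= m by rewrite le_min ler01 powR_ge0.
have m01 : 0 <= m <= 1 by rewrite m0 ge_min lexx.
apply/decrease_setE; split=> //.
have := hgr y hy s (argmin_lin_subdiff pPsi hs) m m01.
rewrite (gap_gradientE hy) subrr add0r /= => /le_trans; apply.
(* m <= B gives m^(q-1) <= B^(q-1) = A a^(1-r), and A a^(1-r) a^r M / q = (1 - c) a *)
have mB : m `^ (q - 1) <= A * a `^ (1 - r).
  have <- : B `^ (q - 1) = A * a `^ (1 - r).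
    by rewrite /B powRVK ?(mulr_ge0 A0 (powR_ge0 _ _)) // subr_eq0 gt_eqF.
  by apply: ge0_ler_powR; rewrite ?nnegrE ?subr_ge0 ?(ltW q1) ?powR_ge0 ?ge_min ?lexx ?orbT.
have aa : a `^ (1 - r) * a `^ r = a.
  by rewrite -powRD ?subrK ?powRr1 ?ltW // gt_eqF ?implybT.
have <- : M / q * m * (A * a `^ (1 - r)) * a `^ r = (1 - c) * m * a.
  by rewrite -[in RHS]aa /A; field; rewrite !gt_eqF //; lra.
rewrite -(mulr_powRB1 m0 q0).
have -> : M * (m * m `^ (q - 1)) / q = M / q * m * m `^ (q - 1) by ring.
by rewrite ler_wpM2r ?powR_ge0 // ler_wpM2l // mulr_ge0 // divr_ge0 // ltW.
Qed.

End LinearizationStep.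

Lemma geometric_lt (R : realType) (C b eps : R) : 0 <= b < 1 -> 0 < eps ->
  exists N : nat, C * b ^+ N < eps.
Proof.
move=> /andP[b0 b1] eps0; have [C0|C0] := lerP C 0.
  by exists 0%N; rewrite expr0 mulr1; exact: le_lt_trans C0 eps0.
have hb : (fun N => b ^+ N) @ \oo --> 0 by apply: cvg_expr; rewrite ger0_norm.
have [N _ /(_ N (leqnn N))] := cvgr_lt _ hb _ (divr_gt0 eps0 C0).
by rewrite ltr_pdivlMr // mulrC; exists N.
Qed.

Section Recurrence.
Variables (R : realType) (e : nat -> R).
Hypothesis e0 : forall k, 0 <= e k.

Lemma geometric_bound (b : R) (N : nat) : 0 <= b ->
  (forall k, (k < N)%N -> e k.+1 <= e k * b) ->
  forall k, (k <= N)%N -> e k <= e 0%N * b ^+ k.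
Proof.
move=> b0 step; elim=> [|k IH] kN; first by rewrite expr0 mulr1.
by rewrite exprSr mulrA; apply: le_trans (step k kN) (ler_wpM2r b0 (IH (ltnW kN))).
Qed.

Lemma sublinear_bound (al be : R) (k0 : nat) : 0 < al -> 0 <= be ->
  (forall k, (k0 <= k)%N -> e k.+1 <= e k * (1 - be * e k `^ al)) ->
  forall k, (k0 <= k)%N ->
    e k <= (e k0 `^ (- al) + al * be * (k - k0)%:R) `^ (- al^-1).
Proof.
move=> al0 be0 step k /subnK <-; rewrite addnK.
(* via Bernoulli, e^(-al) grows by at least al * be per step while e stays positive *)
have inv : forall j, e (j + k0)%N = 0 \/
    [/\ 0 < e k0, 0 < e (j + k0)%N
       & e k0 `^ (- al) + al * be * j%:R <= e (j + k0)%N `^ (- al)].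
  elim=> [|j [ej0|[ek0p ejp IH]]].
  - have [->|ek0] := eqVneq (e k0) 0; first by left.
    by right; rewrite add0n mulr0 addr0 lt_def ek0 e0.
  - left; apply/eqP; rewrite eq_le e0 andbT.
    by apply: le_trans (step _ (leq_addl _ _)) _; rewrite ej0 mul0r.
  - have [ej1|ej1] := eqVneq (e (j.+1 + k0)%N) 0; [by left | right].
    have ejp' : 0 < e (j.+1 + k0)%N by rewrite lt_def ej1 e0.
    split=> //; have := step _ (leq_addl j k0); rewrite -addSn.
    set E := e (j + k0)%N in ejp IH *; set E' := e _; set t := be * E `^ al => hE.
    have t0 : 0 <= t by rewrite mulr_ge0 ?powR_ge0.
    have t1 : t < 1 by rewrite -subr_gt0 -(pmulr_rgt0 _ ejp); exact: lt_le_trans ejp' hE.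
    have := ler_powRN ejp' hE al0; rewrite powRM ?(ltW ejp) ?subr_ge0 ?(ltW t1) // => hpow.
    have := bernoulli_powRN (t:=t) (al:=al); rewrite t0 t1 => /(_ isT al0) bern.
    have hstep : E `^ (- al) + al * be <= E' `^ (- al).
      apply: le_trans _ hpow; have -> : E `^ (- al) + al * be = E `^ (- al) * (1 + al * t).
        by rewrite /t powRN; field; rewrite gt_eqF ?powR_gt0.
      by rewrite ler_wpM2l ?powR_ge0.
    by rewrite -natr1 mulrDr mulr1 addrA; lra.
case: (inv (k - k0)%N) => [->|[ek0p ekp hk]]; first exact: powR_ge0.
have X0 : 0 < e k0 `^ (- al) + al * be * (k - k0)%:R.
  have := powR_gt0 (- al) ek0p; have : 0 <= al * be * (k - k0)%:R.
    by rewrite mulr_ge0 ?mulr_ge0 // ltW.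
  lra.
have ali : 0 < al^-1 by rewrite invr_gt0.
have := ler_powRN X0 hk ali; rewrite -powRrM mulrN mulNr opprK mulfV ?gt_eqF //.
by rewrite powRr1 ?e0.
Qed.
End Recurrence.

Section TwoPhaseRate.
Variables (R : realType) (kap A q r : R) (e : nat -> R).
Hypotheses (kap0 : 0 < kap) (kap1 : kap <= 1) (A0 : 0 < A) (q1 : 1 < q)
  (e0 : forall k, 0 <= e k)
  (step : forall k, e k.+1 <= e k * (1 - kap *
     Num.min 1 ((A * e k `^ (1 - r)) `^ (q - 1)^-1))).

Let p := (q - 1)^-1.
Let p0 : 0 < p. Proof. by rewrite invr_gt0 subr_gt0. Qed.

Let kap_min01 x : 0 <= x -> 0 <= kap * Num.min 1 x <= 1.
Proof.
move=> x0; have m0 : 0 <= Num.min 1 x by rewrite le_min ler01 x0.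
have m1 : Num.min 1 x <= 1 by rewrite ge_min lexx.
by rewrite mulr_ge0 ?(ltW kap0) //= mulr_ile1 ?(ltW kap0).
Qed.

Lemma rate_nonincreasing k j : (k <= j)%N -> e j <= e k.
Proof.
move=> /subnK <-; elim: (j - k)%N => [|i IH]; rewrite ?add0n // addSn.
apply: le_trans (step _) (le_trans _ IH); rewrite ler_piMr // lerBlDr lerDl.
by case/andP: (kap_min01 (powR_ge0 (A * e (i + k) `^ (1 - r)) p)).
Qed.

Lemma rate_exponent_one : r = 1 ->
  forall k, e k <= e 0%N * (1 - kap * Num.min 1 (A `^ p)) ^+ k.
Proof.
move=> r1 k; apply: (geometric_bound (N := k)) => // [|i _].
  by rewrite subr_ge0; case/andP: (kap_min01 (powR_ge0 A p)).
by apply: le_trans (step i) _; rewrite r1 subrr powRr0 mulr1.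
Qed.

Lemma rate_large_step k : A^-1 < e k `^ (1 - r) -> e k.+1 <= e k * (1 - kap).
Proof.
rewrite -(ltr_pM2l A0) mulfV ?gt_eqF // => hA; apply: le_trans (step k) _.
by rewrite min_l ?mulr1 // -{1}(powRr0 (A * e k `^ (1 - r))) ler_powR ?ltW.
Qed.

Lemma rate_small_step k : e k `^ (1 - r) <= A^-1 ->
  e k.+1 <= e k * (1 - kap * A `^ p * e k `^ ((1 - r) * p)).
Proof.
rewrite -(ler_pM2l A0) mulfV ?gt_eqF // => hA; apply: le_trans (step k) _.
have X0 : 0 <= A * e k `^ (1 - r) by rewrite mulr_ge0 ?powR_ge0 ?ltW.
rewrite min_r; last by have := ge0_ler_powR (ltW p0) X0 ler01 hA; rewrite powR1.
by rewrite -/p powRM ?powR_ge0 ?(ltW A0) // -powRrM mulrA.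
Qed.

Lemma rate_two_phase : r < 1 -> exists k0 : nat,
  [/\ e k0 `^ (1 - r) <= A^-1,
      forall k, (k < k0)%N -> A^-1 < e k `^ (1 - r),
      forall k, (k <= k0)%N -> e k <= e 0%N * (1 - kap) ^+ k
    & forall k, (k0 <= k)%N ->
        e k <= (e k0 `^ ((r - 1) / (q - 1))
                + (1 - r) * kap / (q - 1) * A `^ p * (k - k0)%:R) `^ ((q - 1) / (r - 1))].
Proof.
move=> r1; have r0 : 0 < 1 - r by rewrite subr_gt0.
have kap' : 0 <= 1 - kap < 1 by rewrite subr_ge0 kap1 gtrBl kap0.
have Ai0 : 0 < A^-1 by rewrite invr_gt0.
have exP : exists k, e k `^ (1 - r) <= A^-1.
  have [//|nP] := pselect (exists k, e k `^ (1 - r) <= A^-1).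
  exfalso.
  have large k : A^-1 < e k `^ (1 - r).
    by rewrite ltNge; apply/negP => hk; apply: nP; exists k.
  set eps := A^-1 `^ (1 - r)^-1.
  have [N hN] := geometric_lt (e 0%N) kap' (powR_gt0 (1 - r)^-1 Ai0).
  have eN : e N <= eps.
    apply: le_trans (ltW hN); apply: (geometric_bound (N := N)) => // [|k _].
      by case/andP: kap'.
    exact: rate_large_step.
  have := large N; rewrite ltNge => /negP; apply.
  rewrite -(@powRVK _ A^-1 (1 - r)) ?(ltW Ai0) ?gt_eqF //.
  by apply: ge0_ler_powR; rewrite ?nnegrE ?(ltW r0) ?powR_ge0.
have [k0 hk0 min_k0] := ex_minnP exP.
have large k : (k < k0)%N -> A^-1 < e k `^ (1 - r).
  by move=> hk; rewrite ltNge; apply/negP => /min_k0; rewrite leqNgt hk.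
exists k0; split => // [k|k hk].
  apply: (geometric_bound (N := k0)) => // [|i hi]; first by case/andP: kap'.
  exact: rate_large_step (large i hi).
have small j : (k0 <= j)%N -> e j `^ (1 - r) <= A^-1.
  move=> hj; apply: le_trans hk0.
  by apply: ge0_ler_powR; rewrite ?nnegrE ?(ltW r0) ?e0 ?rate_nonincreasing.
have al0 : 0 < (1 - r) * p by rewrite mulr_gt0.
have be0 : 0 <= kap * A `^ p by rewrite mulr_ge0 ?powR_ge0 ?ltW.
have := sublinear_bound e0 al0 be0 (fun j hj => rate_small_step (small j hj)) hk.
have -> : (r - 1) / (q - 1) = - ((1 - r) * p) by rewrite /p; ring.
have -> : (1 - r) * kap / (q - 1) * A `^ p = (1 - r) * p * (kap * A `^ p) by rewrite /p; ring.
have -> // : (q - 1) / (r - 1) = - ((1 - r) * p)^-1.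
by rewrite /p; field; rewrite !subr_eq0 (gt_eqF q1) (gt_eqF r1) (lt_eqF r1).
Qed.

End TwoPhaseRate.

Lemma bigmin_EFin (R : realType) (u : nat -> R) k : exists m : R,
  [/\ (\big[mine/+oo%E]_(i < k.+1) (u i)%:E = m%:E)%E,
      forall i, (i <= k)%N -> m <= u i & exists2 i, (i <= k)%N & m = u i].
Proof.
elim: k => [|k [m [Ek lbm [j jk mE]]]].
  exists (u 0%N); split=> [|i|]; last by exists 0%N.
  - by rewrite big_ord_recr big_ord0 /= minye.
  - by rewrite leqn0 => /eqP ->.
rewrite {}mE in Ek lbm; exists (Num.min (u j) (u k.+1)); split.
- by rewrite big_ord_recr /= Ek -EFin_min.
- move=> i; rewrite leq_eqVlt => /orP[/eqP ->|/lbm]; first by rewrite ge_min lexx orbT.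
  by rewrite ge_min => ->.
- by rewrite minEle; case: ifP => _; [exists j => //; exact: leqW | exists k.+1].
Qed.

Section ConditionalGradient.
Variables (R : realType) (n : nat) (f Psi : 'rV[R]_n -> \bar R)
  (gradf : 'rV[R]_n -> 'rV[R]_n) (c rho q r M : R)
  (x s : nat -> 'rV[R]_n) (theta thetahat : nat -> R).
Hypotheses (hf : closed_proper_convex f) (hPsi : closed_proper_convex Psi)
  (hgrad : forall y, dom Psi y -> is_gradient f y (gradf y))
  (hx0 : dom Psi (x 0%N))
  (hs : forall k, argmin_lin Psi (gradf (x k)) (s k))
  (hth : forall k, 0 <= theta k <= 1)
  (hx : forall k, x k.+1 = (1 - theta k) *: x k + theta k *: s k)
  (hmax : forall k, is_max_of (decrease_set f Psi gradf c (x k) (s k)) (thetahat k))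
  (hthr : forall k, rho * thetahat k <= theta k <= thetahat k).

Local Notation F := (objective f Psi).
Local Notation a k := (fw_gap Psi (gradf (x k)) (x k) (s k)).
Local Notation G := (best_gap f Psi gradf x).

Lemma iterate_dom k : dom Psi (x k).
Proof.
elim: k => // k IH; rewrite hx; case: hPsi => _ hp cvx.
by apply: dom_segment => //; exact: argmin_lin_dom (hs k).
Qed.

Lemma best_gapE k : exists m : R,
  [/\ G k = m%:E, forall i, (i <= k)%N -> m <= F (x k) - F (x i) + a i
    & exists2 i, (i <= k)%N & m = F (x k) - F (x i) + a i].
Proof.
rewrite /best_gap (eq_bigr (fun i : 'I_k.+1 => (F (x k) - F (x i) + a i)%:E)).
  exact: bigmin_EFin.
by move=> i _; rewrite (gap_gradientE hf hPsi hgrad (iterate_dom i) (hs i) (iterate_dom k)).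
Qed.

Lemma best_gap_fin k : G k = (fine (G k))%:E.
Proof. by have [m [-> _ _]] := best_gapE k. Qed.

Lemma best_gap_ge0 k : 0 <= fine (G k).
Proof.
have [m [-> _ [i _ ->]]] := best_gapE k.
exact: (gap_gradient_ge0 hf hPsi hgrad (iterate_dom i) (hs i) (iterate_dom k)).
Qed.

Lemma best_gap_le k : fine (G k) <= a k.
Proof. by have [m [-> /(_ k (leqnn k)) + _]] := best_gapE k; rewrite subrr add0r. Qed.

Lemma best_gap_succ k : fine (G k.+1) <= fine (G k) + (F (x k.+1) - F (x k)).
Proof.
have [m [-> _ [i ik ->]]] := best_gapE k; have [m' [-> /(_ i (leqW ik)) + _]] := best_gapE k.+1.
by rewrite /=; lra.
Qed.

Lemma objective_descent k : F (x k.+1) - F (x k) <= - (c * theta k * a k).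
Proof.
have [S_hat _] := hmax k.
have := decrease_set_le hf hPsi hgrad (iterate_dom k) (hs k) S_hat.
case/andP: (hthr k) => lo hi; case/andP: (hth k) => th0 _.
case/(_ (theta k) (ltac:(by rewrite th0 hi))) /(decrease_setE hf hPsi hgrad (iterate_dom k) (hs k)) => _.
by rewrite hx (objective_segment f Psi gradf); lra.
Qed.

Hypotheses (hc : 0 < c < 1) (hrho : 0 < rho < 1) (hq : 1 < q) (hr : 0 <= r <= 1)
  (hM : 0 < M) (hgr : growth_prop f Psi gradf q r M).

Lemma best_gap_contraction k : fine (G k.+1) <= fine (G k) * (1 - (c + rho - 1) *
  Num.min 1 ((q * (1 - c) / M * (fine (G k) `^ (1 - r))) `^ (q - 1)^-1)).
Proof.
case/andP: hc => c0 c1; case/andP: hrho => rho0 rho1; case/andP: hr => _ r1.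
have := best_gap_succ k; have := objective_descent k.
have := best_gap_ge0 k; have := best_gap_le k; case/andP: (hthr k) => hlo _.
set e := fine (G k); set A := q * (1 - c) / M.
have A0 : 0 <= A.
  by rewrite /A divr_ge0 ?(ltW hM) // mulr_ge0 ?subr_ge0 ?(ltW c1) ?(ltW (lt_trans ltr01 hq)).
set mu := fun t => Num.min 1 ((A * t `^ (1 - r)) `^ (q - 1)^-1).
have mu01 t : 0 <= mu t <= 1 by rewrite le_min ler01 powR_ge0 ge_min lexx.
have [a0|a0] := eqVneq (a k) 0.
  rewrite a0 => e0 e0'; have -> : e = 0 by apply/eqP; rewrite eq_le e0 e0'.
  by rewrite mul0r; lra.
move=> ea e0; have ap : 0 < a k by rewrite lt_def a0 (le_trans e0 ea).
(* the step size is at least rho * mu (a k) >= rho * mu e, and c * rho >= c + rho - 1 *)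
have mu_hat : mu (a k) <= thetahat k.
  exact: (hmax k).2 _ (decrease_set_growth hf hPsi hgrad (iterate_dom k) (hs k) c1 hq hM hgr ap).
have mu_mono : mu e <= mu (a k).
  rewrite le_min ge_min lexx /= ge_min; apply/orP; right.
  apply: ge0_ler_powR; rewrite ?nnegrE ?invr_ge0 ?subr_ge0 ?(ltW hq) ?(mulr_ge0 A0) ?powR_ge0 //.
  by apply: (ler_wpM2l A0); apply: ge0_ler_powR; rewrite ?nnegrE ?(ltW ap) ?subr_ge0.
rewrite -/(mu e) => hdesc hsucc; have [mu0 mu1] := andP (mu01 e).
have step_lb : rho * mu e <= theta k.
  exact: le_trans (ler_wpM2l (ltW rho0) (le_trans mu_mono mu_hat)) hlo.
have cr : c + rho - 1 <= c * rho.
  rewrite -subr_ge0 (_ : _ - _ = (1 - c) * (1 - rho)); last by ring.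
  by rewrite mulr_ge0 // subr_ge0 ltW.
apply: le_trans (_ : e - c * (theta k * a k) <= _).
  by apply: le_trans hsucc _; rewrite mulrA lerD2l.
rewrite [e * _]mulrBr mulr1 lerD2l lerN2 [e * _]mulrC -mulrA.
apply: le_trans (_ : c * rho * (mu e * e) <= _); first by rewrite ler_wpM2r ?mulr_ge0.
by rewrite -mulrA ler_wpM2l ?(ltW c0) // mulrA ler_pM // mulr_ge0 ?(ltW rho0).
Qed.

End ConditionalGradient.

Unset Implicit Arguments. Set Strict Implicit.

Theorem theorem2 (R : realType) (n : nat)
  (f Psi : 'rV[R]_n -> \bar R) (gradf : 'rV[R]_n -> 'rV[R]_n)
  (c rho q r M : R)
  (x s : nat -> 'rV[R]_n) (theta thetahat : nat -> R) :
  closed_proper_convex f -> closed_proper_convex Psi ->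
  (forall y, dom Psi y -> is_gradient f y (gradf y)) ->
  (forall y, dom Psi y -> exists z, argmin_lin Psi (gradf y) z) ->
  0 < c < 1 -> 0 < rho < 1 -> 1 < c + rho ->
  dom Psi (x 0%N) ->
  (forall k, argmin_lin Psi (gradf (x k)) (s k)) ->
  (forall k, 0 <= theta k <= 1) ->
  (forall k, x k.+1 = (1 - theta k) *: x k + theta k *: s k) ->
  (forall k, is_max_of
     [set th : R | 0 <= th <= 1 /\
        ((1 - th)%:E * gap f Psi (x k) (gradf (x k))
          + (Dcal f Psi gradf (x k) (s k) th)%:E
        <= (1 - c * th)%:E * gap f Psi (x k) (gradf (x k)))%E]
     (thetahat k)) ->
  (forall k, rho * thetahat k <= theta k <= thetahat k) ->
  1 < q -> 0 <= r <= 1 -> 0 < M -> growth_prop f Psi gradf q r M ->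
  let G := best_gap f Psi gradf x in
  (forall k : nat,
    (G k.+1 <= (fine (G k) * (1 - (c + rho - 1) *
       Num.min 1 ((q * (1 - c) / M * (fine (G k) `^ (1 - r))) `^ (q - 1)^-1)))%:E)%E)
  /\
  (r = 1 -> forall k : nat,
    (G k <= (fine (G 0%N) * (1 - (c + rho - 1) *
       Num.min 1 ((q * (1 - c) / M) `^ (q - 1)^-1)) ^+ k)%:E)%E)
  /\
  (r < 1 -> exists k0 : nat,
    (fine (G k0) `^ (1 - r) <= M / (q * (1 - c))) /\
    (forall k : nat, (k < k0)%N -> M / (q * (1 - c)) < fine (G k) `^ (1 - r)) /\
    (forall k : nat, (k <= k0)%N ->
       (G k <= (fine (G 0%N) * (1 - (c + rho - 1)) ^+ k)%:E)%E) /\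
    (forall k : nat, (k0 <= k)%N ->
       (G k <= ((fine (G k0) `^ ((r - 1) / (q - 1))
                 + (1 - r) * (c + rho - 1) / (q - 1)
                   * (q * (1 - c) / M) `^ (q - 1)^-1 * (k - k0)%:R)
                `^ ((q - 1) / (r - 1)))%:E)%E)).
Proof.
move=> hf hPsi hgrad _ hc hrho hcr hx0 hs hth hx hmax hthr hq hr hM hgr G.
have Gfin := best_gap_fin hf hPsi hgrad hx0 hs hth hx.
have G0 := best_gap_ge0 hf hPsi hgrad hx0 hs hth hx.
have contr := best_gap_contraction hf hPsi hgrad hx0 hs hth hx hmax hthr hc hrho hq hr hM hgr.
have [[c0 c1] [rho0 rho1]] := (andP hc, andP hrho).
have kap0 : 0 < c + rho - 1 by rewrite subr_gt0.
have kap1 : c + rho - 1 <= 1 by lra.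
have A0 : 0 < q * (1 - c) / M by rewrite divr_gt0 ?mulr_gt0 ?subr_gt0 // (lt_trans ltr01 hq).
rewrite /G; split; first by move=> k; rewrite [X in (X <= _)%E]Gfin lee_fin.
split=> [r1 k | r1].
  by rewrite [X in (X <= _)%E]Gfin lee_fin (rate_exponent_one kap0 kap1 contr r1).
have [k0 [hk0 before geo sub]] := rate_two_phase kap0 kap1 A0 hq G0 contr r1.
rewrite invf_div in hk0 before; exists k0; split=> //; split=> //.
by split=> k hk; rewrite [X in (X <= _)%E]Gfin lee_fin; [exact: geo | exact: sub].
Qed.
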